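(* (1) Let $G$ be a group acting on an event structure $E$ (by automorphisms). Then the set $\mathcal S_G(E)$ of all bijections $\theta:x\cong y$ between configurations of $E$ such that $\theta$ is the restriction to $x$ of the automorphism $g:E\to E$ for some $g\in G$ (so $y=g(x)$) is an isomorphism family on $E$. (2) Let $(A,\mathcal N,\mathcal P,\lambda)$ be a game. Then $A$ equipped with $\mathcal S_-:=\mathcal S_{\mathcal N}(A)$, $\mathcal S_+:=\mathcal S_{\mathcal P}(A)$, and $\mathcal S$ the closure of $\mathcal S_-\cup\mathcal S_+$ under composition (of composable bijections), is a thin concurrent game.
   Context: An event structure (with polarity) is a set $E$ with a partial order $\leq$ such that every element has finitely many elements below it, an irreflexive symmetric relation $\#$ that is hereditary (if $a\leq a'$ and $a\#b$ then $a'\#b$), and a polarity function into $\{-,+\}$. A configuration is a finite down-closed conflict-free subset; $\mathrm{Conf}(E)$ denotes the set of them. $x\subseteq^+y$ (resp. $x\subseteq^-y$) means $x\subseteq y$ and every element of $y\setminus x$ is positive (resp. negative). An automorphism is a bijection preserving and reflecting $\leq$, $\#$ and polarity; an action of a group is a homomorphism into the automorphism group. An automorphism fixes $x$ if it is the identity on $x$; it is negative if whenever it fixes $x$ and $x\subseteq^+y$ it fixes $y$, positive if likewise with $\subseteq^-$. A game is $(A,\mathcal N,\mathcal P,\lambda)$ with $\mathcal N$ a group acting on $A$ by negative automorphisms, $\mathcal P$ a group acting by positive automorphisms, and $\lambda:\mathcal N\times\mathcal P\to\mathcal P\times\mathcal N$ satisfying for all $\alpha,\alpha'\in\mathcal N$,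 $\beta,\beta'\in\mathcal P$: (i) $\lambda(e,\beta)=(\beta,e)$, $\lambda(\alpha,e)=(e,\alpha)$; (ii) if $\lambda(\alpha',\beta)=(\beta_1,\alpha_1)$ and $\lambda(\alpha,\beta_1)=(\beta_2,\alpha_2)$ then $\lambda(\alpha\alpha',\beta)=(\beta_2,\alpha_2\alpha_1)$; (iii) if $\lambda(\alpha,\beta)=(\beta_1,\alpha_1)$ and $\lambda(\alpha_1,\beta')=(\beta_2,\alpha_2)$ then $\lambda(\alpha,\beta\beta')=(\beta_1\beta_2,\alpha_2)$; (iv) if $\lambda(\alpha,\beta)=(\beta',\alpha')$ then $\alpha(\beta(a))=\beta'(\alpha'(a))$ for all $a\in A$. For bijections $\theta:x\cong y$, $\theta':x'\cong y'$ between configurations, write $\theta\subseteq\theta'$ if $x\subseteq x'$ and $\theta'$ restricted to $x$ is $\theta$; write $\theta\subseteq^+\theta'$ (resp. $\subseteq^-$) if moreover $x\subseteq^+x'$ (resp. $x\subseteq^-x'$). An isomorphism family on $E$ is a set $\mathcal S$ of polarity-preserving bijections between configurations of $E$ containing all identities $\mathrm{id}_x$ ($x\in\mathrm{Conf}(E)$), closed under composition and inverses, such that for every $\theta:x\cong y$ in $\mathcal S$: (restriction) if $x'\subseteq x$ is a configuration then the restriction of $\theta$ to $x'$ is in $\mathcal S$; (extension) if $x\subseteq x'\in\mathrm{Conf}(E)$ then there is $\theta':x'\cong y'$ in $\mathcal S$ with $\theta\subseteq\theta'$. A thin concurrent game is an event structure $A$ with three isomorphism families $\mathcal S,\mathcal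 S_+,\mathcal S_-$ with $\mathcal S_+,\mathcal S_-\subseteq\mathcal S$ such that: if $\theta\in\mathcal S_+\cap\mathcal S_-$ then $\theta=\mathrm{id}_x$ for some configuration $x$; if $\theta\in\mathcal S_+$ and $\theta\subseteq^+\theta'\in\mathcal S$ then $\theta'\in\mathcal S_+$; if $\theta\in\mathcal S_-$ and $\theta\subseteq^-\theta'\in\mathcal S$ then $\theta'\in\mathcal S_-$. *)

From Stdlib Require Import List.
Set Implicit Arguments.

(* ---------- Event structures with polarity (true = +, false = -) ---------- *)
Record evstruct := EvStruct {
  ev :> Type;
  ev_le : ev -> ev -> Prop;
  ev_cf : ev -> ev -> Prop;
  ev_pol : ev -> bool;
  ev_le_refl : forall a, ev_le a a;
  ev_le_antisym : forall a b, ev_le a b -> ev_le b a -> a = b;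
  ev_le_trans : forall a b c, ev_le a b -> ev_le b c -> ev_le a c;
  ev_finite_causes : forall a, exists l : list ev, forall b, ev_le b a -> In b l;
  ev_cf_irrefl : forall a, ~ ev_cf a a;
  ev_cf_sym : forall a b, ev_cf a b -> ev_cf b a;
  ev_cf_hered : forall a a' b, ev_le a a' -> ev_cf a b -> ev_cf a' b
}.

Definition is_conf (E : evstruct) (x : E -> Prop) : Prop :=
  (exists l : list E, forall e, x e -> In e l) /\
  (forall a b, ev_le E a b -> x b -> x a) /\
  (forall a b, x a -> x b -> ~ ev_cf E a b).

Definition subset {E : evstruct} (x y : E -> Prop) := forall e, x e -> y e.
Definition subset_pos {E : evstruct} (x y : E -> Prop) :=
  subset x y /\ forall e, y e -> ~ x e -> ev_pol E e = true.
Definition subset_neg {E : evstruct} (x y : E -> Prop) :=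
  subset x y /\ forall e, y e -> ~ x e -> ev_pol E e = false.

Definition is_aut (E : evstruct) (f : E -> E) : Prop :=
  (forall a b, f a = f b -> a = b) /\ (forall b, exists a, f a = b) /\
  (forall a b, ev_le E a b <-> ev_le E (f a) (f b)) /\
  (forall a b, ev_cf E a b <-> ev_cf E (f a) (f b)) /\
  (forall a, ev_pol E (f a) = ev_pol E a).

Definition fixes {E : evstruct} (f : E -> E) (x : E -> Prop) :=
  forall e, x e -> f e = e.

Definition negative_aut {E : evstruct} (f : E -> E) :=
  forall x y, is_conf E x -> is_conf E y -> fixes f x -> subset_pos x y -> fixes f y.
Definition positive_aut {E : evstruct} (f : E -> E) :=
  forall x y, is_conf E x -> is_conf E y -> fixes f x -> subset_neg x y -> fixes f y.

Record group := Group {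
  gcar :> Type;
  gmul : gcar -> gcar -> gcar;
  gone : gcar;
  ginv : gcar -> gcar;
  gmulA : forall a b c, gmul a (gmul b c) = gmul (gmul a b) c;
  gmul1l : forall a, gmul gone a = a;
  gmulVl : forall a, gmul (ginv a) a = gone
}.

Definition is_action {G : group} {E : evstruct} (act : G -> E -> E) : Prop :=
  (forall g, is_aut E (act g)) /\
  (forall e, act (gone G) e = e) /\
  (forall g h e, act (gmul G g h) e = act g (act h e)).

(* ---------- Partial bijections, represented by their graphs ---------- *)
Definition prel (E : evstruct) := E -> E -> Prop.

Definition pdom {E : evstruct} (t : prel E) : E -> Prop := fun a => exists b, t a b.
Definition pcod {E : evstruct} (t : prel E) : E -> Prop := fun b => exists a, t a b.

Definition conf_bij {E : evstruct} (t : prel E) : Prop :=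
  is_conf E (pdom t) /\ is_conf E (pcod t) /\
  (forall a b b', t a b -> t a b' -> b = b') /\
  (forall a a' b, t a b -> t a' b -> a = a').

Definition pol_pres {E : evstruct} (t : prel E) : Prop :=
  forall a b, t a b -> ev_pol E a = ev_pol E b.

Definition id_on {E : evstruct} (x : E -> Prop) : prel E := fun a b => x a /\ a = b.
Definition pinv {E : evstruct} (t : prel E) : prel E := fun b a => t a b.
(* pcomp t t' = t' ∘ t (first t, then t') *)
Definition pcomp {E : evstruct} (t t' : prel E) : prel E :=
  fun a c => exists b, t a b /\ t' b c.
Definition composable {E : evstruct} (t t' : prel E) : Prop :=
  forall e, pcod t e <-> pdom t' e.
Definition prestrict {E : evstruct} (t : prel E) (x : E -> Prop) : prel E :=
  fun a b => t a b /\ x a.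

Definition psub {E : evstruct} (t t' : prel E) := forall a b, t a b -> t' a b.
Definition psub_pos {E : evstruct} (t t' : prel E) :=
  psub t t' /\ subset_pos (pdom t) (pdom t').
Definition psub_neg {E : evstruct} (t t' : prel E) :=
  psub t t' /\ subset_neg (pdom t) (pdom t').

Definition iso_family {E : evstruct} (S : prel E -> Prop) : Prop :=
  (forall t, S t -> conf_bij t /\ pol_pres t) /\
  (forall x, is_conf E x -> S (id_on x)) /\
  (forall t t', S t -> S t' -> composable t t' -> S (pcomp t t')) /\
  (forall t, S t -> S (pinv t)) /\
  (forall t x', S t -> is_conf E x' -> subset x' (pdom t) -> S (prestrict t x')) /\
  (forall t x', S t -> is_conf E x' -> subset (pdom t) x' ->
     exists t', S t' /\ psub t t' /\ (forall e, pdom t' e <-> x' e)).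

Definition S_of {G : group} {E : evstruct} (act : G -> E -> E) : prel E -> Prop :=
  fun t => exists (g : G) (x : E -> Prop), is_conf E x /\
    forall a b, t a b <-> (x a /\ b = act g a).

Inductive comp_closure {E : evstruct} (T : prel E -> Prop) : prel E -> Prop :=
| cc_base : forall t, T t -> comp_closure T t
| cc_comp : forall t t', comp_closure T t -> comp_closure T t' ->
    composable t t' -> comp_closure T (pcomp t t').

Definition is_game {A : evstruct} {N P : group}
  (actN : N -> A -> A) (actP : P -> A -> A) (lam : N -> P -> P * N) : Prop :=
  is_action actN /\ (forall a : N, negative_aut (actN a)) /\
  is_action actP /\ (forall b : P, positive_aut (actP b)) /\
  (forall b : P, lam (gone N) b = (b, gone N)) /\
  (forall a : N, lam a (gone P) = (gone P, a)) /\
  (forall (a a' : N) (b b1 b2 : P) (a1 a2 : N),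
     lam a' b = (b1, a1) -> lam a b1 = (b2, a2) ->
     lam (gmul N a a') b = (b2, gmul N a2 a1)) /\
  (forall (a a1 a2 : N) (b b' b1 b2 : P),
     lam a b = (b1, a1) -> lam a1 b' = (b2, a2) ->
     lam a (gmul P b b') = (gmul P b1 b2, a2)) /\
  (* (iv) *)
  (forall (a a' : N) (b b' : P),
     lam a b = (b', a') -> forall e : A, actN a (actP b e) = actP b' (actN a' e)).

Definition thin_cg {A : evstruct} (S Sp Sm : prel A -> Prop) : Prop :=
  iso_family S /\ iso_family Sp /\ iso_family Sm /\
  (forall t, Sp t -> S t) /\ (forall t, Sm t -> S t) /\
  (forall t, Sp t -> Sm t -> exists x, is_conf A x /\ forall a b, t a b <-> id_on x a b) /\
  (forall t t', Sp t -> psub_pos t t' -> S t' -> Sp t') /\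
  (forall t t', Sm t -> psub_neg t t' -> S t' -> Sm t').

(* Restricting the maps of a group of automorphisms to configurations yields an
   isomorphism family: identities, composites, inverses, restrictions and
   extensions of such restrictions are again restrictions of maps of the group.
   For a game, axiom (iv) rewrites any [actN a \o actP b] as some
   [actP b' \o actN a'], so the maps [actP b \o actN a] form such a group, and
   its restrictions are exactly the composites of bijections of S_- and S_+.
   Thinness rests on one fact: a negative automorphism and a positive one that
   agree on a configuration fix it pointwise.  By induction along causality, a
   positive event whose strict causes are fixed is fixed by the negative
   automorphism, and a negative one by the positive automorphism. *)

From Stdlib Require Import List Classical FunctionalExtensionality PropExtensionality.

Lemma pred_ext {T : Type} (p q : T -> Prop) : (forall u, p u <-> q u) -> p = q.
Proof.
  intros H. apply functional_extensionality; intros u.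
  apply propositional_extensionality, H.
Qed.

Lemma prel_ext {E : evstruct} (t t' : prel E) :
  (forall a b, t a b <-> t' a b) -> t = t'.
Proof.
  intros H. apply functional_extensionality; intros a. apply pred_ext, H.
Qed.

Section Causality.

Context {E : evstruct}.

Definition ev_lt (a b : E) : Prop := ev_le E a b /\ a <> b.

Lemma ev_le_lt_trans {a b c : E} : ev_le E a b -> ev_lt b c -> ev_lt a c.
Proof.
  intros Hab [Hbc Hne]. split; [exact (ev_le_trans E a b c Hab Hbc)|].
  intros <-. apply Hne, (ev_le_antisym E); assumption.
Qed.

Lemma ev_lt_wf : well_founded ev_lt.
Proof.
  assert (Hacc : forall (l : list E) e,
            (forall b, ev_lt b e -> In b l \/ Acc ev_lt b) -> Acc ev_lt e).
  { induction l as [|c l IH]; intros e He.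
    - constructor. intros b Hb. destruct (He b Hb) as [[]|Hb']. exact Hb'.
    - assert (Hc : ev_lt c e -> Acc ev_lt c).
      { intros Hce. apply IH. intros b Hbc.
        destruct (He b (ev_le_lt_trans (proj1 Hbc) Hce)) as [[<-|Hl]|Hb].
        - destruct Hbc as [_ []]. reflexivity.
        - left. exact Hl.
        - right. exact Hb. }
      apply IH. intros b Hb. destruct (He b Hb) as [[<-|Hl]|Hb'].
      + right. exact (Hc Hb).
      + left. exact Hl.
      + right. exact Hb'. }
  intros e. destruct (ev_finite_causes E e) as [l Hl].
  apply (Hacc l). intros b [Hb _]. left. exact (Hl b Hb).
Qed.

Lemma is_conf_down_closed_subset {x y : E -> Prop} :
  is_conf E x -> subset y x -> (forall a b, ev_le E a b -> y b -> y a) ->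
  is_conf E y.
Proof.
  intros [[l Hl] [_ Hcf]] Hyx Hdown. split; [|split; [exact Hdown|]].
  - exists l. intros e He. exact (Hl e (Hyx e He)).
  - intros a b Ha Hb. exact (Hcf a b (Hyx a Ha) (Hyx b Hb)).
Qed.

Definition down (e : E) : E -> Prop := fun u => ev_le E u e.
Definition sdown (e : E) : E -> Prop := fun u => ev_lt u e.

Lemma down_conf (e : E) : is_conf E (down e).
Proof.
  split; [|split].
  - destruct (ev_finite_causes E e) as [l Hl]. exists l. exact Hl.
  - intros a b Hab Hb. exact (ev_le_trans E a b e Hab Hb).
  - intros a b Ha Hb Hab. apply (ev_cf_irrefl E e).
    apply (ev_cf_hered E b e e Hb), ev_cf_sym, (ev_cf_hered E a e b Ha Hab).
Qed.

Lemma sdown_subset_down (e : E) : subset (sdown e) (down e).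
Proof. intros u [Hu _]. exact Hu. Qed.

Lemma sdown_conf (e : E) : is_conf E (sdown e).
Proof.
  apply (is_conf_down_closed_subset (down_conf e) (sdown_subset_down e)).
  intros a b Hab Hb. exact (ev_le_lt_trans Hab Hb).
Qed.

Lemma down_minus_sdown {e u : E} : down e u -> ~ sdown e u -> u = e.
Proof. intros Hu Hn. apply NNPP. intros Hne. apply Hn. split; assumption. Qed.

Lemma negative_aut_fixes_pos_event {f : E -> E} {e : E} :
  negative_aut f -> ev_pol E e = true -> fixes f (sdown e) -> f e = e.
Proof.
  intros Hf Hpol Hfix.
  apply (Hf _ _ (sdown_conf e) (down_conf e) Hfix); [|apply ev_le_refl].
  split; [apply sdown_subset_down|].
  intros u Hu Hn. rewrite (down_minus_sdown Hu Hn). exact Hpol.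
Qed.

Lemma positive_aut_fixes_neg_event {g : E -> E} {e : E} :
  positive_aut g -> ev_pol E e = false -> fixes g (sdown e) -> g e = e.
Proof.
  intros Hg Hpol Hfix.
  apply (Hg _ _ (sdown_conf e) (down_conf e) Hfix); [|apply ev_le_refl].
  split; [apply sdown_subset_down|].
  intros u Hu Hn. rewrite (down_minus_sdown Hu Hn). exact Hpol.
Qed.

Lemma agreeing_auts_fix {f g : E -> E} {x : E -> Prop} :
  negative_aut f -> positive_aut g -> is_conf E x ->
  (forall e, x e -> f e = g e) -> fixes f x.
Proof.
  intros Hf Hg [_ [Hdown _]] Hagree e.
  induction e as [e IH] using (well_founded_ind ev_lt_wf). intros He.
  assert (Hcauses : forall u, sdown e u -> x u) by
    (intros u [Hu _]; exact (Hdown u e Hu He)).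
  assert (Hfix : fixes f (sdown e)) by
    (intros u Hu; exact (IH u Hu (Hcauses u Hu))).
  destruct (ev_pol E e) eqn:Hpol.
  - exact (negative_aut_fixes_pos_event Hf Hpol Hfix).
  - rewrite (Hagree e He). apply (positive_aut_fixes_neg_event Hg Hpol).
    intros u Hu. rewrite <- (Hagree u (Hcauses u Hu)). exact (Hfix u Hu).
Qed.

End Causality.

Section Restrictions.

Context {E : evstruct}.

Lemma is_aut_comp {f h : E -> E} :
  is_aut E f -> is_aut E h -> is_aut E (fun e => h (f e)).
Proof.
  intros (Hinj & Hsurj & Hle & Hcf & Hpol) (Hinj' & Hsurj' & Hle' & Hcf' & Hpol').
  split; [|split; [|split; [|split]]].
  - intros a b H. apply Hinj, Hinj', H.
  - intros c. destruct (Hsurj' c) as [b <-]. destruct (Hsurj b) as [a <-].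
    exists a. reflexivity.
  - intros a b. rewrite (Hle a b). apply Hle'.
  - intros a b. rewrite (Hcf a b). apply Hcf'.
  - intros a. rewrite Hpol'. apply Hpol.
Qed.

Definition img (f : E -> E) (x : E -> Prop) : E -> Prop :=
  fun b => exists a, x a /\ b = f a.

Lemma img_conf {f : E -> E} {x : E -> Prop} :
  is_aut E f -> is_conf E x -> is_conf E (img f x).
Proof.
  intros (_ & Hsurj & Hle & Hcf & _) [[l Hl] [Hdown Hcfree]]. split; [|split].
  - exists (map f l). intros e [a [Ha ->]]. apply in_map, Hl, Ha.
  - intros c d Hcd [b [Hb ->]]. destruct (Hsurj c) as [a <-].
    exists a. split; [|reflexivity]. apply (Hdown a b); [apply Hle, Hcd | exact Hb].
  - intros c d [a [Ha ->]] [b [Hb ->]] Hab. apply (Hcfree a b Ha Hb), Hcf, Hab.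
Qed.

Lemma img_subset_neg {f : E -> E} {x x' : E -> Prop} :
  is_aut E f -> subset_neg x x' -> subset_neg (img f x) (img f x').
Proof.
  intros (_ & _ & _ & _ & Hpol) [Hsub Hneg]. split.
  - intros b [a [Ha ->]]. exists a. split; [exact (Hsub a Ha) | reflexivity].
  - intros b [a [Ha ->]] Hn. rewrite Hpol. apply (Hneg a Ha).
    intros Hxa. apply Hn. exists a. split; [exact Hxa | reflexivity].
Qed.

(* The codomain [pcod (restr f x)] is [img f x] by conversion; several proofs
   below rely on this. *)
Definition restr (f : E -> E) (x : E -> Prop) : prel E :=
  fun a b => x a /\ b = f a.

Lemma pdom_restr (f : E -> E) (x : E -> Prop) : pdom (restr f x) = x.
Proof.
  apply pred_ext; intros a. split.
  - intros [b [Ha _]]. exact Ha.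
  - intros Ha. exists (f a). split; [exact Ha | reflexivity].
Qed.

Lemma restr_conf_bij {f : E -> E} {x : E -> Prop} :
  is_aut E f -> is_conf E x -> conf_bij (restr f x).
Proof.
  intros Hf Hx. split; [|split; [|split]].
  - rewrite pdom_restr. exact Hx.
  - exact (img_conf Hf Hx).
  - intros a b b' [_ ->] [_ ->]. reflexivity.
  - intros a a' b [_ ->] [_ Heq]. apply (proj1 Hf), Heq.
Qed.

Lemma restr_pol_pres {f : E -> E} (x : E -> Prop) :
  is_aut E f -> pol_pres (restr f x).
Proof.
  intros (_ & _ & _ & _ & Hpol) a b [_ ->]. symmetry. apply Hpol.
Qed.

Lemma restr_ext (f h : E -> E) {x : E -> Prop} :
  (forall e, x e -> f e = h e) -> restr f x = restr h x.
Proof.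
  intros H. apply prel_ext; intros a b. unfold restr.
  split; intros [Ha ->]; split; [exact Ha | apply H, Ha | exact Ha | symmetry; apply H, Ha].
Qed.

Lemma psub_restr (f : E -> E) {x x' : E -> Prop} :
  subset x x' -> psub (restr f x) (restr f x').
Proof. intros H a b [Ha ->]. split; [exact (H a Ha) | reflexivity]. Qed.

Lemma psub_restr_inv {f h : E -> E} {x x' : E -> Prop} :
  psub (restr f x) (restr h x') -> subset x x' /\ forall e, x e -> f e = h e.
Proof.
  intros H. split; intros e He;
    destruct (H e (f e) (conj He eq_refl)) as [Hx' Heq]; assumption.
Qed.

Lemma id_on_restr (x : E -> Prop) : id_on x = restr (fun e => e) x.
Proof. apply prel_ext; intros a b. split; intros [Ha Heq]; split; auto. Qed.

Lemma composable_restr {f h : E -> E} {x y : E -> Prop} :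
  composable (restr f x) (restr h y) -> y = img f x.
Proof.
  unfold composable. intros H. rewrite pdom_restr in H.
  apply pred_ext; intros b. symmetry. apply H.
Qed.

Lemma pcomp_restr (f h : E -> E) (x : E -> Prop) :
  pcomp (restr f x) (restr h (img f x)) = restr (fun e => h (f e)) x.
Proof.
  apply prel_ext; intros a c. split.
  - intros [b [[Ha ->] [_ ->]]]. split; [exact Ha | reflexivity].
  - intros [Ha ->]. exists (f a).
    split; split; try reflexivity; [exact Ha | exists a; split; [exact Ha | reflexivity]].
Qed.

Lemma pinv_restr {f k : E -> E} (x : E -> Prop) :
  (forall e, k (f e) = e) -> pinv (restr f x) = restr k (img f x).
Proof.
  intros Hk. apply prel_ext; intros b a. unfold pinv, restr. split.
  - intros [Ha ->]. split; [exists a; split; [exact Ha | reflexivity] | symmetry; apply Hk].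
  - intros [[a' [Ha' ->]] ->]. rewrite Hk. split; [exact Ha' | reflexivity].
Qed.

Lemma prestrict_restr (f : E -> E) {x x' : E -> Prop} :
  subset x' x -> prestrict (restr f x) x' = restr f x'.
Proof.
  intros H. apply prel_ext; intros a b. unfold prestrict, restr.
  split; [intros [[_ ->] Ha]; split; auto | intros [Ha ->]; split; auto].
Qed.

Definition restrictions (F : (E -> E) -> Prop) : prel E -> Prop :=
  fun t => exists f x, F f /\ is_conf E x /\ t = restr f x.

Lemma restrictions_mono {F F' : (E -> E) -> Prop} {t : prel E} :
  (forall f, F f -> F' f) -> restrictions F t -> restrictions F' t.
Proof. intros H (f & x & Hf & Hx & Ht). exists f, x. auto. Qed.

Definition is_aut_group (F : (E -> E) -> Prop) : Prop :=
  (forall f, F f -> is_aut E f) /\ F (fun e => e) /\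
  (forall f h, F f -> F h -> F (fun e => h (f e))) /\
  (forall f, F f -> exists k, F k /\ forall e, k (f e) = e).

Lemma iso_family_restrictions {F : (E -> E) -> Prop} :
  is_aut_group F -> iso_family (restrictions F).
Proof.
  intros (Haut & Hid & Hcomp & Hinv).
  split; [|split; [|split; [|split; [|split]]]].
  - intros t (f & x & Hf & Hx & ->).
    split; [apply restr_conf_bij | apply restr_pol_pres]; auto.
  - intros x Hx. rewrite id_on_restr. exists (fun e => e), x. auto.
  - intros t t' (f & x & Hf & Hx & ->) (h & y & Hh & _ & ->) Hc.
    rewrite (composable_restr Hc), pcomp_restr. exists (fun e => h (f e)), x. auto.
  - intros t (f & x & Hf & Hx & ->). destruct (Hinv f Hf) as (k & Hk & Hkf).
    rewrite (pinv_restr x Hkf). exists k, (img f x). auto using img_conf.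
  - intros t x' (f & x & Hf & _ & ->) Hx' Hsub. rewrite pdom_restr in Hsub.
    rewrite (prestrict_restr f Hsub). exists f, x'. auto.
  - intros t x' (f & x & Hf & _ & ->) Hx' Hsub. rewrite pdom_restr in Hsub.
    exists (restr f x'). split; [exists f, x'; auto|].
    split; [exact (psub_restr f Hsub) | rewrite pdom_restr; reflexivity].
Qed.

End Restrictions.

Definition act_maps {G : group} {E : evstruct} (act : G -> E -> E) : (E -> E) -> Prop :=
  fun f => exists g, f = act g.

Lemma S_of_restrictions {G : group} {E : evstruct} (act : G -> E -> E) :
  S_of act = restrictions (act_maps act).
Proof.
  apply pred_ext; intros t. split.
  - intros (g & x & Hx & Ht). exists (act g), x.
    split; [exists g; reflexivity | split; [exact Hx | apply prel_ext, Ht]].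
  - intros (f & x & [g ->] & Hx & ->). exists g, x. split; [exact Hx | reflexivity].
Qed.

Section Action.

Context {G : group} {E : evstruct} {act : G -> E -> E} (act_action : is_action act).

Lemma act_aut (g : G) : is_aut E (act g).
Proof. exact (proj1 act_action g). Qed.

Lemma act_one (e : E) : act (gone G) e = e.
Proof. exact (proj1 (proj2 act_action) e). Qed.

Lemma act_mul (g h : G) (e : E) : act (gmul G g h) e = act g (act h e).
Proof. exact (proj2 (proj2 act_action) g h e). Qed.

Lemma act_invK (g : G) (e : E) : act (ginv G g) (act g e) = e.
Proof. rewrite <- act_mul, gmulVl. apply act_one. Qed.

Lemma act_maps_aut_group : is_aut_group (act_maps act).
Proof.
  split; [|split; [|split]].
  - intros f [g ->]. apply act_aut.
  - exists (gone G). apply functional_extensionality; intros e. symmetry. apply act_one.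
  - intros f h [g ->] [g' ->]. exists (gmul G g' g).
    apply functional_extensionality; intros e. symmetry. apply act_mul.
  - intros f [g ->]. exists (act (ginv G g)). split; [exists (ginv G g); reflexivity | apply act_invK].
Qed.

Lemma iso_family_S_of : iso_family (S_of act).
Proof. rewrite S_of_restrictions. apply iso_family_restrictions, act_maps_aut_group. Qed.

End Action.

Section Games.

Context {A : evstruct} {N P : group} (actN : N -> A -> A) (actP : P -> A -> A).

Hypothesis actN_action : is_action actN.
Hypothesis actP_action : is_action actP.
Hypothesis actN_negative : forall a, negative_aut (actN a).
Hypothesis actP_positive : forall b, positive_aut (actP b).
Hypothesis actN_actP_swap :
  forall a b, exists a' b', forall e, actN a (actP b e) = actP b' (actN a' e).

Definition game_maps : (A -> A) -> Prop :=
  fun f => exists a b, f = fun e => actP b (actN a e).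

Lemma game_maps_aut_group : is_aut_group game_maps.
Proof.
  split; [|split; [|split]].
  - intros f (a & b & ->). apply is_aut_comp; apply act_aut; assumption.
  - exists (gone N), (gone P). apply functional_extensionality; intros e.
    rewrite (act_one actN_action), (act_one actP_action). reflexivity.
  - intros f h (a & b & ->) (a' & b' & ->).
    destruct (actN_actP_swap a' b) as (a2 & b2 & Hswap).
    exists (gmul N a2 a), (gmul P b' b2). apply functional_extensionality; intros e.
    rewrite Hswap, (act_mul actN_action), (act_mul actP_action). reflexivity.
  - intros f (a & b & ->).
    destruct (actN_actP_swap (ginv N a) (ginv P b)) as (a' & b' & Hswap).
    exists (fun e => actP b' (actN a' e)). split; [exists a', b'; reflexivity|].
    intros e. rewrite <- Hswap, (act_invK actP_action). apply (act_invK actN_action).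
Qed.

Lemma actN_maps_game_maps (f : A -> A) : act_maps actN f -> game_maps f.
Proof.
  intros [a ->]. exists a, (gone P). apply functional_extensionality; intros e.
  symmetry. apply (act_one actP_action).
Qed.

Lemma actP_maps_game_maps (f : A -> A) : act_maps actP f -> game_maps f.
Proof.
  intros [b ->]. exists (gone N), b. apply functional_extensionality; intros e.
  rewrite (act_one actN_action). reflexivity.
Qed.

Lemma comp_closure_restrictions :
  comp_closure (fun t => S_of actN t \/ S_of actP t) = restrictions game_maps.
Proof.
  rewrite !S_of_restrictions. apply pred_ext; intros t. split.
  - intros Ht. induction Ht as [t [Ht|Ht] | t t' _ IH _ IH' Hc].
    + exact (restrictions_mono actN_maps_game_maps Ht).
    + exact (restrictions_mono actP_maps_game_maps Ht).
    + destruct (iso_family_restrictions game_maps_aut_group) as (_ & _ & Hcomp & _).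
      exact (Hcomp t t' IH IH' Hc).
  - intros (f & x & (a & b & ->) & Hx & ->).
    rewrite <- (pcomp_restr (actN a) (actP b) x).
    apply cc_comp; [apply cc_base; left | apply cc_base; right |].
    + exists (actN a), x. split; [exists a; reflexivity | auto].
    + exists (actP b), (img (actN a) x).
      split; [exists b; reflexivity | split; [apply img_conf, Hx; apply act_aut, actN_action | reflexivity]].
    + intros e. rewrite pdom_restr. reflexivity.
Qed.

Lemma S_of_actP_actN_ids (t : prel A) :
  S_of actP t -> S_of actN t ->
  exists x, is_conf A x /\ forall a b, t a b <-> id_on x a b.
Proof.
  rewrite !S_of_restrictions.
  intros (f & x & [b ->] & Hx & ->) (h & x' & [a ->] & Hx' & Heq).
  assert (Hsub : psub (restr (actP b) x) (restr (actN a) x'))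
    by (rewrite Heq; intros u v H; exact H).
  destruct (psub_restr_inv Hsub) as [_ Hagree].
  assert (Hfix : fixes (actN a) x).
  { apply (agreeing_auts_fix (actN_negative a) (actP_positive b) Hx).
    intros e He. symmetry. exact (Hagree e He). }
  assert (HfixP : forall e, x e -> actP b e = e)
    by (intros e He; rewrite (Hagree e He); exact (Hfix e He)).
  exists x. split; [exact Hx|].
  rewrite (restr_ext _ (fun e => e) HfixP), id_on_restr. intros u v. apply iff_refl.
Qed.

Lemma S_of_actP_pos_ext_closed (t t' : prel A) :
  S_of actP t -> psub_pos t t' -> restrictions game_maps t' -> S_of actP t'.
Proof.
  rewrite !S_of_restrictions.
  intros (f & x & [b ->] & Hx & ->) [Hsub Hpos] (h & x' & (a1 & b1 & ->) & Hx' & ->).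
  rewrite !pdom_restr in Hpos.
  destruct (psub_restr_inv Hsub) as [_ Hagree].
  assert (Hfix : fixes (actN a1) x).
  { apply (agreeing_auts_fix (actN_negative a1) (actP_positive (gmul P (ginv P b1) b)) Hx).
    intros e He. rewrite (act_mul actP_action), (Hagree e He).
    symmetry. apply (act_invK actP_action). }
  assert (Hfix' : fixes (actN a1) x') by exact (actN_negative a1 x x' Hx Hx' Hfix Hpos).
  exists (actP b1), x'. split; [exists b1; reflexivity | split; [exact Hx'|]].
  apply restr_ext. intros e He. rewrite (Hfix' e He). reflexivity.
Qed.

Lemma S_of_actN_neg_ext_closed (t t' : prel A) :
  S_of actN t -> psub_neg t t' -> restrictions game_maps t' -> S_of actN t'.
Proof.
  rewrite !S_of_restrictions.
  intros (f & x & [a ->] & Hx & ->) [Hsub Hneg] (h & x' & (a1 & b1 & ->) & Hx' & ->).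
  rewrite !pdom_restr in Hneg.
  destruct (psub_restr_inv Hsub) as [_ Hagree].
  pose proof (act_aut actN_action a1) as Ha1.
  assert (Hagree' : forall u, img (actN a1) x u ->
                      actN (gmul N a (ginv N a1)) u = actP b1 u).
  { intros u [e [He ->]].
    rewrite (act_mul actN_action), (act_invK actN_action). exact (Hagree e He). }
  assert (Hfix : fixes (actP b1) (img (actN a1) x)).
  { intros u Hu. rewrite <- (Hagree' u Hu).
    exact (agreeing_auts_fix (actN_negative _) (actP_positive b1) (img_conf Ha1 Hx)
             Hagree' u Hu). }
  assert (Hfix' : fixes (actP b1) (img (actN a1) x'))
    by exact (actP_positive b1 _ _ (img_conf Ha1 Hx) (img_conf Ha1 Hx') Hfix
                (img_subset_neg Ha1 Hneg)).
  exists (actN a1), x'. split; [exists a1; reflexivity | split; [exact Hx'|]].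
  apply restr_ext. intros e He. apply Hfix'. exists e. split; [exact He | reflexivity].
Qed.

Lemma thin_cg_game :
  thin_cg (comp_closure (fun t => S_of actN t \/ S_of actP t)) (S_of actP) (S_of actN).
Proof.
  rewrite comp_closure_restrictions.
  split; [|split; [|split; [|split; [|split; [|split; [|split]]]]]].
  - exact (iso_family_restrictions game_maps_aut_group).
  - exact (iso_family_S_of actP_action).
  - exact (iso_family_S_of actN_action).
  - intros t. rewrite S_of_restrictions. apply restrictions_mono, actP_maps_game_maps.
  - intros t. rewrite S_of_restrictions. apply restrictions_mono, actN_maps_game_maps.
  - exact S_of_actP_actN_ids.
  - exact S_of_actP_pos_ext_closed.
  - exact S_of_actN_neg_ext_closed.
Qed.

End Games.

Theorem mainTheorem6 :
  (forall (E : evstruct) (G : group) (act : G -> E -> E),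
     is_action act -> iso_family (S_of act)) /\
  (forall (A : evstruct) (N P : group) (actN : N -> A -> A) (actP : P -> A -> A)
          (lam : N -> P -> P * N),
     is_game actN actP lam ->
     thin_cg (comp_closure (fun t => S_of actN t \/ S_of actP t))
             (S_of actP) (S_of actN)).
Proof.
  split.
  - intros E G act Hact. exact (iso_family_S_of Hact).
  - intros A N P actN actP lam (HN & Hneg & HP & Hpos & _ & _ & _ & _ & Hlam).
    assert (Hswap : forall a b, exists a' b',
               forall e, actN a (actP b e) = actP b' (actN a' e)).
    { intros a b. destruct (lam a b) as [b' a'] eqn:Hl.
      exists a', b'. exact (Hlam _ _ _ _ Hl). }
    apply thin_cg_game; assumption.
Qed.
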